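(* Let $k\geq2$ and let $W\subseteq\mathbb{Z}_{3k}$, $\overline W=\mathbb{Z}_{3k}\setminus W$, satisfy: for every $i\in\mathbb{Z}_{3k}$, $|x^i\cap W|\geq2$ and $|C^i\cap\overline W|\geq2$; and for every $i\in\overline W$, $[i+2k,i+2k+\omega(i)]_{3k}\subseteq W$. Then $p^i\not\equiv0\pmod 3$ for every $i\in\overline W$.
   Context: $\mathbb{Z}_{3k}=\{0,\dots,3k-1\}$ with addition modulo $3k$; $[a,b]_{3k}$ is the cyclic closed interval from $a$ to $b$. $C^i=\{i,\dots,i+k-1\}$ (mod $3k$), $x^i=\{i,i+k,i+2k\}$. For $i\in\overline W$, $\omega(i)=\min\{t\ge0:i+k+t\in\overline W\}$. For $i\in\overline W$ the sequence $(r^i_t)_{t\ge0}\subseteq\mathbb{Z}_{3k}$ is defined by $r^i_0=i$ and $r^i_t=r^i_{t-1}+k+\omega(r^i_{t-1})$ for $t\ge1$ (all terms lie in $\overline W$), and $p^i=\max\{t\geq0:\sum_{j=0}^{t-1}\omega(r^i_j)\leq k-1\}$. *)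

(* Z_{3k} is modelled as 'I_(3*k); arithmetic on
   representatives is done in nat and reduced with %% (3*k). *)
From mathcomp Require Import all_boot.
Set Implicit Arguments. Unset Strict Implicit. Unset Printing Implicit Defensive.

Definition inW (k : nat) (W : {set 'I_(3*k)}) (a : nat) : bool :=
  [exists x : 'I_(3*k), (val x == a %% (3*k)) && (x \in W)].

Definition Cset (k i : nat) : {set 'I_(3*k)} :=
  [set j : 'I_(3*k) | [exists t : 'I_k, val j == (i + t) %% (3*k)]].

Definition xset (k i : nat) : {set 'I_(3*k)} :=
  [set j : 'I_(3*k) | [|| val j == i %% (3*k), val j == (i + k) %% (3*k)
                       | val j == (i + 2*k) %% (3*k)]].

(* omega(i) = min {t >= 0 : i+k+t in Wbar}.  Since residues mod 3k repeat
   with period 3k, the minimum (when it exists) is < 3k, so it is the first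
   index t in [0,3k) with i+k+t in Wbar (computed by find). *)
Definition omega (k : nat) (W : {set 'I_(3*k)}) (i : nat) : nat :=
  find (fun t => ~~ inW W (i + k + t)) (iota 0 (3*k)).

Fixpoint rseq (k : nat) (W : {set 'I_(3*k)}) (i : nat) (t : nat) : nat :=
  match t with
  | 0 => i %% (3*k)
  | t'.+1 => (rseq W i t' + k + omega W (rseq W i t')) %% (3*k)
  end.

Definition omsum (k : nat) (W : {set 'I_(3*k)}) (i t : nat) : nat :=
  \sum_(0 <= j < t) omega W (rseq W i j).

Definition is_p (k : nat) (W : {set 'I_(3*k)}) (i p : nat) : Prop :=
  omsum W i p <= k - 1 /\ (forall t, omsum W i t <= k - 1 -> t <= p).

From mathcomp Require Import all_boot.
From mathcomp Require Import zify.
Set Implicit Arguments.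

(* Every term r_t of the orbit lies outside W, so x^{r_t} meets W at most in
   r_t + 2k unless omega(r_t) > 0; hence each step contributes at least one to
   S(t) = sum_{j<t} omega(r_j), and p exists with S(p) <= k-1 < S(p+1).  Since
   r_p = i + p k + S(p) (mod 3k) and k - S(p) <= omega(r_p), the hypothesis on
   omega puts r_p + 3k - S(p) = i + p k into W.  If 3 | p this is i itself,
   contradicting i \notin W. *)

Section Orbit.
Variables (k : nat) (W : {set 'I_(3*k)}).

Lemma inW_mod a : inW W (a %% (3*k)) = inW W a.
Proof. by rewrite /inW modn_mod. Qed.

Lemma inW_val (x : 'I_(3*k)) : inW W x = (x \in W).
Proof.
apply/existsP/idP => [[y /andP[/eqP xy yW]]|xW].
  by have -> : x = y by apply: val_inj; rewrite /= xy modn_small.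
by exists x; rewrite modn_small // eqxx xW.
Qed.

Lemma omega_notin a (y : 'I_(3*k)) : y \notin W -> ~~ inW W (a + k + omega W a).
Proof.
move=> yW; have N_gt0 : 0 < 3*k by apply: leq_ltn_trans (ltn_ord y).
set N := 3*k in N_gt0 *.
have hitsWbar : has (fun t => ~~ inW W (a + k + t)) (iota 0 N).
  apply/hasP; exists ((y + N - (a + k) %% N) %% N).
    by rewrite mem_iota add0n ltn_pmod.
  rewrite -inW_mod modnDmr {1}(divn_eq (a + k) N).
  have ak_lt : (a + k) %% N < N by rewrite ltn_pmod.
  have -> : (a + k) %/ N * N + (a + k) %% N + (y + N - (a + k) %% N)
            = ((a + k) %/ N).+1 * N + y by lia.
  by rewrite modnMDl modn_small // inW_val.
have := nth_find 0 hitsWbar; rewrite nth_iota ?add0n //.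
by rewrite -[X in _ < X](size_iota 0 N) -has_find.
Qed.

Lemma omega_gt0 (x : 'I_(3*k)) :
  x \notin W -> 2 <= #|xset k x :&: W| -> 0 < omega W x.
Proof.
move=> xW xW2; have N_gt0 : 0 < 3*k by apply: leq_ltn_trans (ltn_ord x).
rewrite lt0n; apply/negP => /eqP om0.
have := @omega_notin x x xW; rewrite om0 addn0 => xkW.
have : xset k x :&: W \subset [set Ordinal (ltn_pmod (x + 2*k) N_gt0)].
  apply/subsetP => j; rewrite !inE => /andP[/or3P[] /eqP jE jW].
  - have jx : j = x by apply: val_inj; rewrite /= jE modn_small.
    by rewrite -jx jW in xW.
  - by rewrite -inW_mod -jE inW_val jW in xkW.
  - exact/eqP/val_inj.
by move/subset_leq_card; rewrite cards1 => /(leq_trans xW2).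
Qed.

Lemma rseq_lt i t : 0 < 3*k -> rseq W i t < 3*k.
Proof. by case: t => [|t] /= N_gt0; apply: ltn_pmod. Qed.

Lemma rseq_notin (i : 'I_(3*k)) t : i \notin W -> ~~ inW W (rseq W i t).
Proof.
move=> iW; case: t => [|t] /=; rewrite inW_mod; first by rewrite inW_val.
exact: omega_notin iW.
Qed.

Lemma omsum0 i : omsum W i 0 = 0.
Proof. by rewrite /omsum big_geq. Qed.

Lemma omsumS i t : omsum W i t.+1 = omsum W i t + omega W (rseq W i t).
Proof. by rewrite /omsum big_nat_recr. Qed.

Lemma rseqE i t : rseq W i t = (i + t * k + omsum W i t) %% (3*k).
Proof.
elim: t => [|t IH] /=; first by rewrite omsum0 mul0n !addn0.
by rewrite {1}IH -addnA modnDml omsumS; congr (_ %% _); lia.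
Qed.

Lemma exists_is_p i :
  (forall t, 0 < omega W (rseq W i t)) ->
  exists2 p, is_p W i p & k - 1 < omsum W i p.+1.
Proof.
move=> om_gt0.
have omsum_ge t : t <= omsum W i t.
  by elim: t => [|t IH] //; rewrite omsumS; have := om_gt0 t; lia.
have [|t /(leq_trans (omsum_ge t)) //|p Pp Pmax] :=
  @ex_maxnP (fun t => omsum W i t <= k - 1) (k - 1).
  by exists 0; rewrite omsum0.
exists p; first by split.
by rewrite ltnNge; apply/negP => /Pmax; rewrite ltnn.
Qed.

(* Stepping [k - S(p)] past [r_p + 2k] undoes the drift [S(p)] of the orbit. *)
Lemma rseq_backshift i p :
  omsum W i p <= k ->
  inW W (rseq W i p + 2*k + (k - omsum W i p)) = inW W (i + p * k).
Proof.
move=> Sp_le; rewrite rseqE -inW_mod -addnA modnDml inW_mod.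
have -> : i + p * k + omsum W i p + (2*k + (k - omsum W i p))
          = 1 * (3*k) + (i + p * k) by lia.
by rewrite -inW_mod modnMDl inW_mod.
Qed.

End Orbit.

Theorem mainTheorem9 (k : nat) (W : {set 'I_(3*k)}) :
  2 <= k ->
  (forall i : 'I_(3*k), 2 <= #|xset k i :&: W|) ->
  (forall i : 'I_(3*k), 2 <= #|Cset k i :&: ~: W|) ->
  (forall i : 'I_(3*k), i \notin W ->
     forall t, t <= omega W i -> inW W (i + 2*k + t)) ->
  forall i : 'I_(3*k), i \notin W ->
    exists p, is_p W i p /\ p %% 3 != 0.
Proof.
move=> _ xW2 _ omW i iW.
have N_gt0 : 0 < 3*k by apply: leq_ltn_trans (ltn_ord i).
pose r t := Ordinal (@rseq_lt k W i t N_gt0).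
have r_notin t : r t \notin W by rewrite -inW_val rseq_notin.
have [|p p_is_p Sp1_gt] := @exists_is_p k W i.
  by move=> t; exact: omega_gt0 (r_notin t) (xW2 _).
exists p; split=> //; have [Sp_le _] := p_is_p.
apply/negP => /eqP p3.
have shift_le : k - omsum W i p <= omega W (rseq W i p).
  by rewrite omsumS in Sp1_gt; lia.
have := omW _ (r_notin p) _ shift_le.
rewrite /= rseq_backshift; last by lia.
have -> : i + p * k = p %/ 3 * (3*k) + i by lia.
by rewrite -inW_mod modnMDl inW_mod inW_val (negbTE iW).
Qed.
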